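(* Let $p$ be even with $3 \le p \le \sqrt{n}$, and let $\ell$ be an integer with $p/2\le\ell$ and $\ell < n/p^2$. For $0\le m\le\ell$ let \[\mu_m = \sum_{s=0}^{\min(m,p/2)} (-1)^s\binom{m}{s}\binom{\ell-m}{p/2-s}\binom{n-\ell-m}{p/2-s}.\] Then for all $0 \le m\le \ell$, \[\frac{|\mu_m|}{\mu_0} \le \max\left\{\left(1-\frac{m}{\ell}\right)^{p/2},\ \frac{p}{n}\right\}.\]
   Context: The $\mu_m$ are the eigenvalues of the matrix $\mathbf{X}$ indexed by $\ell$-subsets of $[n]$ with $\mathbf{X}_{S,T}=\mathbf{1}_{|S\triangle T|=p}$; in particular $\mu_0 = \binom{\ell}{p/2}\binom{n-\ell}{p/2}$. Binomial coefficients $\binom{a}{b}$ are $0$ when $b<0$ or $b>a$. *)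

From mathcomp Require Import all_boot all_order all_algebra.
Set Implicit Arguments. Unset Strict Implicit. Unset Printing Implicit Defensive.
Import Order.TTheory GRing.Theory Num.Theory.
Local Open Scope ring_scope.

(* Natural-number subtractions are only used where they are nonnegative
   (s <= p/2, m <= l, l + m <= n under the theorem's hypotheses). *)
Definition mu (n l p m : nat) : int :=
  \sum_(0 <= s < (minn m p./2).+1)
    (-1) ^+ s * ('C(m, s) * 'C(l - m, p./2 - s) * 'C(n - l - m, p./2 - s))%:R.

(* Bound mu_m by the sum T of the absolute values of its terms, with k = p/2 and
   d = l - m.  If d < k, the s = 0 term vanishes and every other term loses a factor
   about k/n against mu_0 = C(l,k) C(n-l,k); Vandermonde's identity then gives
   T <= (p/n) mu_0.  If d >= k, the s-th term is at most rho^s C(d,k) C(n-l,k) with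
   rho = m k^2 / ((d+1-k)(n-l+1-k)), while C(d,k)/C(l,k) <= (1 - rho) (d/l)^k because
   n is so large that the last factor of the falling-factorial ratio absorbs rho;
   summing the geometric series gives T <= (d/l)^k mu_0. *)

From mathcomp Require Import all_boot all_order all_algebra.
From mathcomp Require Import zify ring.
Import Order.TTheory GRing.Theory Num.Theory.

Lemma bin_mul_le_succ d j k : j < k -> 'C(d, j) * (d.+1 - k) <= k * 'C(d, j.+1).
Proof.
move=> lt_jk; rewrite mulnC.
apply: (@leq_trans ((d - j) * 'C(d, j))); first by rewrite leq_mul2r; apply/orP; right; lia.
by rewrite -mul_bin_left leq_mul2r lt_jk orbT.
Qed.

Lemma bin_mul_exp_le d k s : s <= k ->
  'C(d, k - s) * (d.+1 - k) ^ s <= k ^ s * 'C(d, k).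
Proof.
elim: s => [|s IHs] le_sk; first by rewrite subn0 mul1n muln1.
have lt_k : k - s.+1 < k by lia.
have step := bin_mul_le_succ d (k - s.+1) k lt_k.
rewrite (_ : (k - s.+1).+1 = k - s) in step; last by lia.
rewrite expnS mulnCA mulnA (mulnC (d.+1 - k)).
apply: leq_trans (leq_mul step (leqnn _)) _.
by rewrite -mulnA expnS -mulnA leq_mul2l IHs ?orbT // ltnW.
Qed.

Lemma leq_bin2r_half N i j : i <= j -> j <= N.+1 - j -> 'C(N, i) <= 'C(N, j).
Proof.
rewrite leq_eqVlt => /predU1P[-> // | lt_ij le_half].
have := @bin_mul_exp_le N j (j - i) (leq_subr _ _).
rewrite subKn => [le_mul|]; last exact: ltnW.
have j_gt0 : 0 < j by apply: leq_ltn_trans lt_ij.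
rewrite -(@leq_pmul2l (j ^ (j - i))) ?expn_gt0 ?j_gt0 //.
apply: leq_trans le_mul; rewrite mulnC leq_mul2l leq_exp2r ?subn_gt0 //.
by rewrite le_half orbT.
Qed.

Lemma leq_bin_exp n m : 'C(n, m) <= n ^ m.
Proof.
rewrite (leq_trans (leq_pmulr _ (fact_gt0 m))) // bin_ffact.
elim: m => [|m IHm] //; rewrite ffactnSr expnSr.
by apply: leq_mul => //; apply: leq_subr.
Qed.

Lemma ffact_mul_exp_le d l j : d <= l -> d ^_ j * l ^ j <= d ^ j * l ^_ j.
Proof.
move=> le_dl; elim: j => [|j IHj] //.
rewrite !ffactnSr !expnSr mulnACA [X in _ <= X]mulnACA.
by apply: leq_mul => //; nia.
Qed.

(* The factor j = k of the ratio d^_(k+1) l^(k+1) / (d^(k+1) l^_(k+1)), with d = u + k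
   and l = d + m; it alone absorbs the loss rho. *)
Lemma last_factor_le u k m M : 0 < u -> k.+1 ^ 3 * (u + k + m) <= k * M ->
  u * (u + k + m) * (u * M) + m * k.+1 ^ 2 * (u + k) * (u + m)
    <= u * M * (u + k) * (u + m).
Proof.
move=> u_gt0 le_M.
have -> : u * M * (u + k) * (u + m) = u * (u + k + m) * (u * M) + m * (u * (k * M)).
  by ring.
rewrite leq_add2l.
have le_uk : (u + k) * (u + m) <= k.+1 * u * (u + k + m) by apply: leq_mul; nia.
have := leq_mul (leqnn (m * k.+1 ^ 2)) le_uk; rewrite mulnA => /leq_trans; apply.
apply: (@leq_trans (m * (u * (k.+1 ^ 3 * (u + k + m))))); first by apply: eq_leq; ring.
by do 2!apply: leq_mul => //.
Qed.

Lemma ffact_ratio_le d m k M : 0 < k <= d -> k ^ 3 * (d + m) <= (k - 1) * M ->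
  d ^_ k * (d + m) ^ k * ((d.+1 - k) * M) + m * k ^ 2 * (d ^ k * (d + m) ^_ k)
    <= (d.+1 - k) * M * (d ^ k * (d + m) ^_ k).
Proof.
case: k => [//|k] /= lt_kd le_M; rewrite subSS subn0 in le_M; rewrite subSS.
have u_gt0 : 0 < d - k by rewrite subn_gt0.
have d_eq : d = d - k + k by rewrite subnK // ltnW.
have key := @last_factor_le (d - k) k m M u_gt0.
rewrite -d_eq (_ : d - k + m = d + m - k) in key; last by lia.
have {}key := key le_M.
set l := d + m in le_M key *.
have le_first := @ffact_mul_exp_le d l k (leq_addr _ _).
rewrite !ffactnSr !expnSr.
set A := d ^_ k * l ^ k in le_first *; set B := d ^ k * l ^_ k in le_first *.
apply: (@leq_trans (B * ((d - k) * l * ((d - k) * M) + m * k.+1 ^ 2 * d * (l - k)))).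
  rewrite mulnDr leq_add //; last by apply: eq_leq; rewrite /B; ring.
  apply: leq_trans (leq_mul le_first (leqnn _)); apply: eq_leq; rewrite /A; ring.
apply: leq_trans (leq_mul (leqnn B) key) _; apply: eq_leq; rewrite /B; ring.
Qed.

Lemma bin_ratio_le d m k M : 0 < k <= d -> k ^ 3 * (d + m) <= (k - 1) * M ->
  'C(d, k) * (d + m) ^ k * ((d.+1 - k) * M) + m * k ^ 2 * (d ^ k * 'C(d + m, k))
    <= (d.+1 - k) * M * (d ^ k * 'C(d + m, k)).
Proof.
move=> le_kd le_M; have := ffact_ratio_le d m k M le_kd le_M; rewrite -!bin_ffact => le_ffact.
rewrite -(leq_pmul2r (fact_gt0 k)).
by apply: leq_trans (leq_trans _ le_ffact) _; apply: eq_leq; ring.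
Qed.

Lemma mu_term_le m d N N' k s : s <= k -> N' <= N ->
  'C(m, s) * 'C(d, k - s) * 'C(N', k - s) * ((d.+1 - k) * (N.+1 - k)) ^ s
    <= (m * k ^ 2) ^ s * ('C(d, k) * 'C(N, k)).
Proof.
move=> le_sk le_N.
rewrite (_ : _ * _ ^ s = 'C(m, s) * ('C(d, k - s) * (d.+1 - k) ^ s)
                          * ('C(N', k - s) * (N.+1 - k) ^ s)); last by rewrite expnMn; ring.
rewrite (_ : (m * k ^ 2) ^ s * _ = m ^ s * (k ^ s * 'C(d, k)) * (k ^ s * 'C(N, k)));
  last by rewrite !expnMn; ring.
apply: leq_mul; first apply: leq_mul.
- exact: leq_bin_exp.
- exact: bin_mul_exp_le.
apply: leq_trans (bin_mul_exp_le N k s le_sk).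
by rewrite leq_mul2r leq_bin2l ?orbT.
Qed.

Lemma large_n_bounds n l k : 2 <= k -> k <= l -> l * (k.*2 * k.*2) < n ->
  2 * (l + k) <= n /\ k ^ 3 * l <= (k - 1) * ((n - l).+1 - k).
Proof.
move=> k_ge2 le_kl lt_n.
set X := k * k * l.
have n_gt : 4 * X < n by move: lt_n; rewrite (_ : _ * _ = 4 * X) // /X -!mul2n; ring.
have kk_ge4 : 4 <= k * k := leq_mul k_ge2 k_ge2.
have kl_ge4 : 4 <= k * l := leq_mul k_ge2 (leq_trans k_ge2 le_kl).
have l_le : 2 * l <= X by rewrite /X; apply: leq_mul; first exact: leq_trans kk_ge4.
have k_le : 2 * k <= X by rewrite /X mulnAC; apply: leq_mul; first exact: leq_trans kl_ge4.
split; first lia.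
have kX_ge : 2 * X <= k * X by rewrite leq_mul2r k_ge2 orbT.
have M_ge : 3 * X <= (n - l).+1 - k by lia.
rewrite (_ : k ^ 3 * l = k * X); last by rewrite /X; ring.
apply: leq_trans (leq_mul (leqnn _) M_ge); rewrite mulnCA mulnBl mul1n; lia.
Qed.

Definition mu_majorant (n l k m : nat) : nat :=
  \sum_(0 <= s < k.+1) 'C(m, s) * 'C(l - m, k - s) * 'C(n - l - m, k - s).

Local Open Scope ring_scope.

Lemma mu0E n l p : mu n l p 0 = ('C(l, p./2) * 'C(n - l, p./2))%:R.
Proof. by rewrite /mu min0n big_nat1 expr0 mul1r bin0 mul1n !subn0. Qed.

Lemma norm_mu_le n l p m : `|mu n l p m| <= (mu_majorant n l p./2 m)%:R.
Proof.
rewrite /mu /mu_majorant natr_sum.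
rewrite (big_cat_nat (leq0n _) (_ : (minn m p./2).+1 <= p./2.+1)%N) ?ltnS ?geq_minr //=.
rewrite -[X in X <= _]addr0 lerD ?sumr_ge0 //.
apply: le_trans (ler_norm_sum _ _ _) _; apply: ler_sum => s _.
by rewrite normrM normrX normrN1 expr1n mul1r normr_nat.
Qed.

Lemma mu_majorant_mul_n_le n l k m : (m <= l)%N -> (l - m < k)%N ->
  (2 * (l + k) <= n)%N ->
  (mu_majorant n l k m * n <= k.*2 * ('C(l, k) * 'C(n - l, k)))%N.
Proof.
move=> le_ml lt_dk le_n; set M := ((n - l).+1 - k)%N.
suff le_M : (mu_majorant n l k m * M <= k * ('C(l, k) * 'C(n - l, k)))%N.
  apply: leq_trans (leq_mul (leqnn _) (_ : n <= 2 * M)%N) _; first lia.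
  by rewrite mulnCA -doubleMl -mul2n leq_mul2l le_M orbT.
have -> : 'C(l, k) = (\sum_(s < k.+1) 'C(m, s) * 'C(l - m, k - s))%N.
  by rewrite binomial.Vandermonde subnKC.
rewrite /mu_majorant big_mkord !big_distrl big_distrr /=.
apply: leq_sum => -[[|s] /= lt_sk] _.
  by rewrite subn0 (bin_small lt_dk) muln0 !mul0n.
rewrite -mulnA [X in (_ <= X)%N]mulnCA leq_mul2l; apply/orP; right.
apply: (@leq_trans ('C(n - l, k - s.+1) * M)).
  by rewrite leq_mul2r leq_bin2l ?leq_subr ?orbT.
apply: leq_trans (bin_mul_le_succ (n - l) (k - s.+1) k _) _; first lia.
by rewrite leq_mul2l leq_bin2r_half ?orbT //; lia.
Qed.

Lemma geometric_sum_mul_le (R : numDomainType) (r : R) n : 0 <= r ->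
  (\sum_(i < n) r ^+ i) * (1 - r) <= 1.
Proof.
by move=> r_ge0; rewrite mulrC -opprB mulNr -subrX1 opprB lerBlDr lerDl exprn_ge0.
Qed.

Lemma mu_majorant_mul_exp_le n l k m : (0 < k <= l - m)%N ->
  (k ^ 3 * l <= (k - 1) * ((n - l).+1 - k))%N ->
  (mu_majorant n l k m * l ^ k <= (l - m) ^ k * ('C(l, k) * 'C(n - l, k)))%N.
Proof.
move=> le_kd le_M.
set d := (l - m)%N in le_kd *; set M := ((n - l).+1 - k)%N in le_M *.
have l_eq : l = (d + m)%N by rewrite /d subnK //; lia.
set D := ((d.+1 - k) * M)%N; set E := (m * k ^ 2)%N.
have D_gt0 : (0 < D)%N by rewrite muln_gt0; apply/andP; split; nia.
pose rho : rat := E%:R / D%:R.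
have rho_ge0 : 0 <= rho by rewrite divr_ge0.
have majorant_le : (mu_majorant n l k m)%:R
    <= \sum_(s < k.+1) rho ^+ s * ('C(d, k) * 'C(n - l, k))%:R.
  rewrite /mu_majorant natr_sum big_mkord; apply: ler_sum => -[s /= lt_sk] _.
  rewrite expr_div_n mulrAC ler_pdivlMr ?exprn_gt0 ?ltr0n // -!natrX -!natrM ler_nat.
  exact: mu_term_le (leq_subr _ _).
have ratio_le : ('C(d, k) * l ^ k)%:R <= (1 - rho) * (d ^ k * 'C(l, k))%:R.
  have D_pos : (0 : rat) < D%:R by rewrite ltr0n.
  rewrite mulrBl mul1r lerBrDr -(ler_pM2r D_pos) mulrDl mulrAC divfK ?lt0r_neq0 //.
  rewrite -!natrM -natrD ler_nat [X in (_ <= X)%N]mulnC l_eq.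
  by apply: bin_ratio_le; rewrite // -l_eq.
rewrite -(ler_nat rat) !natrM natrX.
apply: le_trans (ler_wpM2r (exprn_ge0 _ (ler0n _ _)) majorant_le) _.
have S_ge0 : 0 <= \sum_(i < k.+1) rho ^+ i by apply: sumr_ge0 => i _; exact: exprn_ge0.
rewrite [X in X <= _](_ : _ = (\sum_(i < k.+1) rho ^+ i) * ('C(d, k) * l ^ k)%:R
                              * 'C(n - l, k)%:R);
  last by rewrite -big_distrl !natrM natrX /=; ring.
apply: le_trans (ler_wpM2r (ler0n _ _) (ler_wpM2l S_ge0 ratio_le)) _.
set Y := (d ^ k * 'C(l, k))%:R.
apply: (@le_trans _ _ (1 * (Y * 'C(n - l, k)%:R))); last by rewrite mul1r /Y !natrM natrX mulrA.
rewrite [X in X <= _](_ : _ = (\sum_(i < k.+1) rho ^+ i) * (1 - rho) * (Y * 'C(n - l, k)%:R)).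
  by rewrite ler_wpM2r ?mulr_ge0 ?ler0n // geometric_sum_mul_le.
by ring.
Qed.

Theorem lemma2 (n p l : nat) :
  ~~ odd p -> (3 <= p)%N -> (p * p <= n)%N ->
  (p./2 <= l)%N -> (l * (p * p) < n)%N ->
  forall m : nat, (m <= l)%N ->
    `|(mu n l p m)%:~R| / (mu n l p 0)%:~R
      <= Num.max ((1 - (m%:R / l%:R)) ^+ p./2) (p%:R / n%:R :> rat).
Proof.
move=> p_even p_ge3 _ k_le_l lt_n m le_ml.
have p_eq : p = (p./2).*2 by rewrite -[LHS]odd_double_half (negbTE p_even).
set k := p./2 in k_le_l p_eq *; rewrite p_eq in lt_n.
have k_ge2 : (2 <= k)%N by move: p_ge3; rewrite p_eq; lia.
have [le_n le_cube] := large_n_bounds n l k k_ge2 k_le_l lt_n.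
have C0_gt0 : (0 < 'C(l, k) * 'C(n - l, k))%N by rewrite muln_gt0 !bin_gt0 k_le_l; lia.
rewrite mu0E rmorph_nat ler_pdivrMr ?ltr0n // -intr_norm.
apply: le_trans (_ : (mu_majorant n l k m)%:R <= _).
  by rewrite -(rmorph_nat (intr : int -> rat)) ler_int norm_mu_le.
have [n_gt0 l_gt0] : (0 < n)%N /\ (0 < l)%N by lia.
case: (ltnP (l - m) k) => [lt_dk | le_kd].
  apply: (@le_trans _ _ (p%:R / n%:R * ('C(l, k) * 'C(n - l, k))%:R)).
    rewrite mulrAC ler_pdivlMr ?ltr0n // -!natrM ler_nat p_eq.
    exact: mu_majorant_mul_n_le.
  by rewrite ler_wpM2r ?le_max ?lexx ?orbT.
have d_ratio : 1 - m%:R / l%:R = (l - m)%:R / l%:R :> rat.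
  by rewrite natrB // mulrBl divff ?pnatr_eq0 -?lt0n.
apply: (@le_trans _ _ ((1 - m%:R / l%:R) ^+ k * ('C(l, k) * 'C(n - l, k))%:R)).
  rewrite d_ratio expr_div_n mulrAC ler_pdivlMr ?exprn_gt0 ?ltr0n //.
  rewrite -!natrX -!natrM ler_nat; apply: mu_majorant_mul_exp_le => //.
  by rewrite (leq_trans _ k_ge2).
by rewrite ler_wpM2r ?le_max ?lexx.
Qed.
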